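(* Let $\mathsf V,\mathsf W$ be quantales and $G:\mathsf{Cat}(\mathsf V)\to\mathsf{Cat}(\mathsf W)$ a locally monotone functor with a left adjoint $F:\mathsf{Cat}(\mathsf W)\to\mathsf{Cat}(\mathsf V)$. If $F$ sends fully faithful and fully dense $\mathsf W$-functors to fully faithful and fully dense $\mathsf V$-functors, then $G$ sends Cauchy complete $\mathsf V$-categories to Cauchy complete $\mathsf W$-categories.
   Context: A quantale $(\mathsf V,\otimes,k)$ is a complete anti-symmetric lattice with an associative, commutative operation $\otimes$ with neutral element $k$ distributing over arbitrary suprema. A $\mathsf V$-category $(X,a)$ is a set with $a:X\times X\to\mathsf V$ with $k\le a(x,x)$ and $a(x,y)\otimes a(y,z)\le a(x,z)$; $\mathsf V$-functors $f:(X,a)\to(Y,b)$ satisfy $a(x,y)\le b(f(x),f(y))$; they form $\mathsf{Cat}(\mathsf V)$. For $\mathsf V$-functors $f,g:X\to Y$, $f\le g$ means $k\le b(f(x),g(x))$ for all $x$; $G$ locally monotone means $f\le g$ implies $Gf\le Gg$. $f$ is fully faithful if $a(x,y)=b(f(x),f(y))$, and fully dense if $\bigvee_{x\in X}b(y,f(x))\otimes b(f(x),y')=b(y,y')$ for all $y,y'\in Y$. A $\mathsf V$-module $\varphi:(X,a)\rightharpoonup(Y,b)$ is a map $X\times Y\to\mathsf V$ with $a(x,x')\otimes\varphi(x',y)\le\varphi(x,y)$, $\varphi(x,y)\otimes b(y,y')\le\varphi(x,y')$; composition $(\psi\cdot\varphi)(x,z)=\bigvee_y\varphi(x,y)\otimes\psi(y,z)$;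 $\varphi\dashv\psi$ means $a\le\psi\cdot\varphi$ and $\varphi\cdot\psi\le b$. $E=(\{\star\},k)$. $X$ is Cauchy complete if every left adjoint module $\varphi:E\rightharpoonup X$ is of the form $y\mapsto a(x,y)$ for some $x\in X$. *)

Set Implicit Arguments.
Unset Strict Implicit.

Record quantale := Quantale {
  qcar :> Type;
  qle : qcar -> qcar -> Prop;
  qsup : (qcar -> Prop) -> qcar;
  qten : qcar -> qcar -> qcar;
  qk : qcar;
  qle_refl : forall x, qle x x;
  qle_trans : forall x y z, qle x y -> qle y z -> qle x z;
  qle_antisym : forall x y, qle x y -> qle y x -> x = y;
  qsup_ub : forall (S : qcar -> Prop) x, S x -> qle x (qsup S);
  qsup_least : forall (S : qcar -> Prop) y, (forall x, S x -> qle x y) -> qle (qsup S) y;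
  qten_assoc : forall x y z, qten x (qten y z) = qten (qten x y) z;
  qten_comm : forall x y, qten x y = qten y x;
  qten_k : forall x, qten qk x = x;
  qten_sup : forall x (S : qcar -> Prop),
    qten x (qsup S) = qsup (fun v => exists y, S y /\ v = qten x y)
}.

Definition qjoin (V : quantale) (I : Type) (f : I -> V) : V :=
  qsup (fun v => exists i, v = f i).

Record vcat (V : quantale) := VCat {
  vobj :> Type;
  vhom : vobj -> vobj -> V;
  vhom_refl : forall x, qle (qk V) (vhom x x);
  vhom_trans : forall x y z, qle (qten (vhom x y) (vhom y z)) (vhom x z)
}.
Arguments vhom {V} v _ _.

Record vfun (V : quantale) (X Y : vcat V) := VFun {
  vmap :> X -> Y;
  vmap_mono : forall x y, qle (vhom X x y) (vhom Y (vmap x) (vmap y))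
}.

Definition vfun_id (V : quantale) (X : vcat V) : vfun X X :=
  @VFun V X X (fun x => x) (fun x y => qle_refl _).

Lemma vfun_comp_mono (V : quantale) (X Y Z : vcat V) (f : vfun X Y) (g : vfun Y Z) :
  forall x y, qle (vhom X x y) (vhom Z (g (f x)) (g (f y))).
Proof. intros x y. eapply qle_trans; [apply (vmap_mono f)| apply (vmap_mono g)]. Qed.

Definition vfun_comp (V : quantale) (X Y Z : vcat V) (g : vfun Y Z) (f : vfun X Y)
  : vfun X Z := @VFun V X Z (fun x => g (f x)) (vfun_comp_mono f g).

Definition vfun_le (V : quantale) (X Y : vcat V) (f g : vfun X Y) : Prop :=
  forall x, qle (qk V) (vhom Y (f x) (g x)).

Definition fully_faithful (V : quantale) (X Y : vcat V) (f : vfun X Y) : Prop :=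
  forall x x', vhom X x x' = vhom Y (f x) (f x').

Definition fully_dense (V : quantale) (X Y : vcat V) (f : vfun X Y) : Prop :=
  forall y y', qjoin (fun x : X => qten (vhom Y y (f x)) (vhom Y (f x) y')) = vhom Y y y'.

Definition is_module (V : quantale) (X Y : vcat V) (phi : X -> Y -> V) : Prop :=
  (forall x x' y, qle (qten (vhom X x x') (phi x' y)) (phi x y)) /\
  (forall x y y', qle (qten (phi x y) (vhom Y y y')) (phi x y')).

Definition mod_comp (V : quantale) (X Y Z : vcat V)
  (psi : Y -> Z -> V) (phi : X -> Y -> V) : X -> Z -> V :=
  fun x z => qjoin (fun y : Y => qten (phi x y) (psi y z)).

Definition mod_le (V : quantale) (X Y : Type) (phi psi : X -> Y -> V) : Prop :=
  forall x y, qle (phi x y) (psi x y).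

Definition mod_adj (V : quantale) (X Y : vcat V)
  (phi : X -> Y -> V) (psi : Y -> X -> V) : Prop :=
  mod_le (vhom X) (mod_comp (Y:=Y) psi phi) /\ mod_le (mod_comp (Y:=X) phi psi) (vhom Y).

Definition unitE (V : quantale) : vcat V.
Proof.
  refine (@VCat V unit (fun _ _ => qk V) _ _).
  - intros; apply qle_refl.
  - intros; rewrite qten_k; apply qle_refl.
Defined.

Definition cauchy_complete (V : quantale) (X : vcat V) : Prop :=
  forall phi : unitE V -> X -> V,
    is_module phi ->
    (exists psi : X -> unitE V -> V, is_module psi /\ mod_adj phi psi) ->
    exists x : X, forall y : X, phi tt y = vhom X x y.

(* Morphisms of Cat(V) are compared by their underlying maps. *)
Record functor (V W : quantale) := Functor {
  fobj :> vcat V -> vcat W;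
  fmap : forall (X Y : vcat V), vfun X Y -> vfun (fobj X) (fobj Y);
  fmap_ext : forall X Y (f g : vfun X Y), (forall x, f x = g x) ->
               forall x, fmap f x = fmap g x;
  fmap_id : forall X x, fmap (vfun_id X) x = x;
  fmap_comp : forall X Y Z (f : vfun X Y) (g : vfun Y Z) x,
      fmap (vfun_comp g f) x = fmap g (fmap f x)
}.
Arguments fmap {V W} f0 {X Y} _.

Definition locally_monotone (V W : quantale) (G : functor V W) : Prop :=
  forall (X Y : vcat V) (f g : vfun X Y), vfun_le f g -> vfun_le (fmap G f) (fmap G g).

Record adjunction (V W : quantale) (F : functor W V) (G : functor V W) := Adjunction {
  adj_unit : forall X : vcat W, vfun X (G (F X));
  adj_counit : forall A : vcat V, vfun (F (G A)) A;
  adj_unit_nat : forall (X Y : vcat W) (f : vfun X Y) x,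
      fmap G (fmap F f) (adj_unit X x) = adj_unit Y (f x);
  adj_counit_nat : forall (A B : vcat V) (g : vfun A B) a,
      g (adj_counit A a) = adj_counit B (fmap F (fmap G g) a);
  adj_triangle_F : forall (X : vcat W) a,
      adj_counit (F X) (fmap F (adj_unit X) a) = a;
  adj_triangle_G : forall (A : vcat V) x,
      fmap G (adj_counit A) (adj_unit (G A) x) = x
}.

(* Let phi -| psi be an adjoint pair of W-modules E -/-> G A.  Gluing one new
   object onto G A, with phi and psi as its hom-values, yields a W-category Y
   into which G A embeds fully faithfully and densely.  Applying F, the counit
   F G A -> A extends along the fully faithful and dense F(G A) -> F Y, because
   A is Cauchy complete; transposing the extension back through the adjunction
   gives, by local monotonicity of G, a retraction Y -> G A up to isomorphism.
   The new object sent into G A represents phi. *)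
From Stdlib Require Import IndefiniteDescription.
Set Implicit Arguments.
Unset Strict Implicit.

Section QuantaleFacts.
Variable V : quantale.

Lemma qten_mono_r (x y z : V) : qle y z -> qle (qten x y) (qten x z).
Proof.
  intros Hyz.
  assert (Hsup : qsup (fun v : V => v = y \/ v = z) = z).
  { apply qle_antisym.
    - apply qsup_least. intros v [-> | ->]; [exact Hyz | apply qle_refl].
    - apply qsup_ub. now right. }
  rewrite <- Hsup, qten_sup.
  apply qsup_ub. exists y. split; [now left | reflexivity].
Qed.

Lemma qten_mono_l (x y z : V) : qle x y -> qle (qten x z) (qten y z).
Proof. intros H. rewrite (qten_comm x), (qten_comm y). now apply qten_mono_r. Qed.

Lemma qten_mono (x y x' y' : V) : qle x x' -> qle y y' -> qle (qten x y) (qten x' y').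
Proof.
  intros H1 H2. eapply qle_trans; [apply qten_mono_l, H1 | apply qten_mono_r, H2].
Qed.

Lemma qten_k_r (x : V) : qten x (qk V) = x.
Proof. rewrite qten_comm. apply qten_k. Qed.

Lemma qle_ten_k_r (x a : V) : qle (qk V) a -> qle x (qten x a).
Proof. intros H. rewrite <- (qten_k_r x) at 1. now apply qten_mono_r. Qed.

Lemma qle_ten_k_l (x a : V) : qle (qk V) a -> qle x (qten a x).
Proof. intros H. rewrite qten_comm. now apply qle_ten_k_r. Qed.

Lemma qle_qjoin (I : Type) (f : I -> V) x i : qle x (f i) -> qle x (qjoin f).
Proof. intros H. eapply qle_trans; [exact H |]. apply qsup_ub. now exists i. Qed.

Lemma qjoin_least (I : Type) (f : I -> V) y :
  (forall i, qle (f i) y) -> qle (qjoin f) y.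
Proof. intros H. apply qsup_least. intros v [i ->]. apply H. Qed.

Lemma qten_qjoin_le_l (I : Type) (f : I -> V) x y :
  (forall i, qle (qten x (f i)) y) -> qle (qten x (qjoin f)) y.
Proof.
  intros H. unfold qjoin. rewrite qten_sup. apply qsup_least.
  intros v [w [[i ->] ->]]. apply H.
Qed.

Lemma qten_qjoin_le_r (I : Type) (f : I -> V) x y :
  (forall i, qle (qten (f i) x) y) -> qle (qten (qjoin f) x) y.
Proof.
  intros H. rewrite qten_comm. apply qten_qjoin_le_l.
  intros i. rewrite qten_comm. apply H.
Qed.

End QuantaleFacts.
Arguments qle_qjoin {V I f x} i.

Section VCatFacts.
Variables (V : quantale) (X : vcat V).

Definition vequiv (a b : X) : Prop :=
  qle (qk V) (vhom X a b) /\ qle (qk V) (vhom X b a).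

Lemma vhom_precomp_le (a a' b : X) :
  qle (qk V) (vhom X a a') -> qle (vhom X a' b) (vhom X a b).
Proof.
  intros H. eapply qle_trans; [apply (qle_ten_k_l _ H) | apply vhom_trans].
Qed.

Lemma vhom_postcomp_le (a b b' : X) :
  qle (qk V) (vhom X b b') -> qle (vhom X a b) (vhom X a b').
Proof.
  intros H. eapply qle_trans; [apply (qle_ten_k_r _ H) | apply vhom_trans].
Qed.

Lemma vequiv_of_vhom_eq (a a' : X) :
  (forall b, vhom X a b = vhom X a' b) -> vequiv a a'.
Proof.
  intros H. split; [rewrite H | rewrite <- H]; apply vhom_refl.
Qed.

Lemma qjoin_vhom_ten (f : X -> V) (a : X) :
  (forall x y, qle (qten (vhom X x y) (f y)) (f x)) ->
  qjoin (fun x => qten (vhom X a x) (f x)) = f a.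
Proof.
  intros Hf. apply qle_antisym.
  - apply qjoin_least. intros x. apply Hf.
  - apply (qle_qjoin a). apply qle_ten_k_l, vhom_refl.
Qed.

Lemma qjoin_ten_vhom (f : X -> V) (b : X) :
  (forall x y, qle (qten (f x) (vhom X x y)) (f y)) ->
  qjoin (fun x => qten (f x) (vhom X x b)) = f b.
Proof.
  intros Hf. apply qle_antisym.
  - apply qjoin_least. intros x. apply Hf.
  - apply (qle_qjoin b). apply qle_ten_k_r, vhom_refl.
Qed.

End VCatFacts.

(* The extension sends q to a representing object of the module
   \/_p Q(q, j p) (x) A(h p, -), which full density of j makes left adjoint. *)
Section CauchyExtension.
Variables (V : quantale) (P Q A : vcat V) (j : vfun P Q) (h : vfun P A).
Hypotheses (j_ff : fully_faithful j) (j_fd : fully_dense j).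

Definition ext_left (q : Q) (_ : unitE V) (b : A) : V :=
  qjoin (fun p : P => qten (vhom Q q (j p)) (vhom A (h p) b)).

Definition ext_right (q : Q) (a : A) (_ : unitE V) : V :=
  qjoin (fun p : P => qten (vhom A a (h p)) (vhom Q (j p) q)).

Lemma ext_left_module q : is_module (ext_left q).
Proof.
  split.
  - intros u u' b. simpl. rewrite qten_k. apply qle_refl.
  - intros u b b'. apply qten_qjoin_le_r. intros p. apply (qle_qjoin p).
    rewrite <- qten_assoc. apply qten_mono_r, vhom_trans.
Qed.

Lemma ext_right_module q : is_module (ext_right q).
Proof.
  split.
  - intros a a' u. apply qten_qjoin_le_l. intros p. apply (qle_qjoin p).
    rewrite qten_assoc. apply qten_mono_l, vhom_trans.
  - intros a u u'. simpl. rewrite qten_k_r. apply qle_refl.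
Qed.

Lemma ext_left_precomp q q' b :
  qle (qten (vhom Q q q') (ext_left q' tt b)) (ext_left q tt b).
Proof.
  apply qten_qjoin_le_l. intros p. apply (qle_qjoin p).
  rewrite qten_assoc. apply qten_mono_l, vhom_trans.
Qed.

Lemma ext_left_image p b : ext_left (j p) tt b = vhom A (h p) b.
Proof.
  apply qle_antisym.
  - apply qjoin_least. intros p'. rewrite <- j_ff.
    eapply qle_trans; [apply qten_mono_l, (vmap_mono h) | apply vhom_trans].
  - apply (qle_qjoin p). apply qle_ten_k_l. rewrite <- j_ff. apply vhom_refl.
Qed.

Lemma ext_adj q : mod_adj (ext_left q) (ext_right q).
Proof.
  split.
  - intros u u'. simpl. eapply qle_trans; [apply (vhom_refl q) |].
    rewrite <- j_fd. apply qjoin_least. intros p. apply (qle_qjoin (h p)).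
    apply qten_mono.
    + apply (qle_qjoin p). apply qle_ten_k_r, vhom_refl.
    + apply (qle_qjoin p). apply qle_ten_k_l, vhom_refl.
  - intros a b. apply qjoin_least. intros u.
    apply qten_qjoin_le_r. intros p. apply qten_qjoin_le_l. intros p'.
    rewrite !qten_assoc. eapply qle_trans; [| apply vhom_trans].
    apply qten_mono_l. rewrite <- qten_assoc.
    eapply qle_trans; [| apply vhom_trans]. apply qten_mono_r.
    eapply qle_trans; [apply vhom_trans |]. rewrite <- j_ff. apply (vmap_mono h).
Qed.

Lemma cauchy_complete_extension :
  cauchy_complete A -> exists g : vfun Q A, forall p, vequiv (g (j p)) (h p).
Proof.
  intros HA.
  assert (Hrep : forall q, {a : A | forall b, ext_left q tt b = vhom A a b}).
  { intros q. apply constructive_indefinite_description, HA.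
    - apply ext_left_module.
    - exists (ext_right q). split; [apply ext_right_module | apply ext_adj]. }
  set (g := fun q => proj1_sig (Hrep q)).
  assert (Hg : forall q b, ext_left q tt b = vhom A (g q) b).
  { intros q. exact (proj2_sig (Hrep q)). }
  assert (g_mono : forall q q', qle (vhom Q q q') (vhom A (g q) (g q'))).
  { intros q q'. rewrite <- Hg.
    eapply qle_trans; [| apply ext_left_precomp].
    apply qle_ten_k_r. rewrite Hg. apply vhom_refl. }
  exists (VFun g_mono). intros p. apply vequiv_of_vhom_eq. intros b. simpl.
  now rewrite <- Hg, ext_left_image.
Qed.

End CauchyExtension.

(* The collage of an adjoint pair phi -| psi : E -/-> X: the category X with one
   object [None] adjoined, with homs phi into X, psi out of X and the
   idempotent psi . phi on itself. *)
Section Collage.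
Variables (V : quantale) (X : vcat V)
  (phi : unitE V -> X -> V) (psi : X -> unitE V -> V).
Hypotheses (phi_module : is_module phi) (psi_module : is_module psi)
  (phi_psi : mod_adj phi psi).

Lemma phi_psi_counit x y : qle (qten (psi x tt) (phi tt y)) (vhom X x y).
Proof.
  eapply qle_trans; [| apply (proj2 phi_psi x y)]. apply (qle_qjoin tt), qle_refl.
Qed.

Lemma psi_ten_unit x :
  qle (qten (psi x tt) (mod_comp (Y:=X) psi phi tt tt)) (psi x tt).
Proof.
  apply qten_qjoin_le_l. intros y. rewrite qten_assoc.
  eapply qle_trans; [apply qten_mono_l, phi_psi_counit | apply (proj1 psi_module)].
Qed.

Lemma unit_ten_phi y :
  qle (qten (mod_comp (Y:=X) psi phi tt tt) (phi tt y)) (phi tt y).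
Proof.
  apply qten_qjoin_le_r. intros x. rewrite <- qten_assoc.
  eapply qle_trans; [apply qten_mono_r, phi_psi_counit | apply (proj2 phi_module)].
Qed.

Definition collage_hom (u v : option X) : V :=
  match u, v with
  | Some x, Some y => vhom X x y
  | None, Some y => phi tt y
  | Some x, None => psi x tt
  | None, None => mod_comp (Y:=X) psi phi tt tt
  end.

Lemma collage_hom_refl u : qle (qk V) (collage_hom u u).
Proof. destruct u; [apply vhom_refl | apply (proj1 phi_psi tt tt)]. Qed.

Lemma collage_hom_trans u v w :
  qle (qten (collage_hom u v) (collage_hom v w)) (collage_hom u w).
Proof.
  destruct u as [x|], v as [y|], w as [z|]; simpl.
  - apply vhom_trans.
  - apply (proj1 psi_module).
  - apply phi_psi_counit.
  - apply psi_ten_unit.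
  - apply (proj2 phi_module).
  - apply (qle_qjoin y), qle_refl.
  - apply unit_ten_phi.
  - apply qten_qjoin_le_r. intros y. rewrite <- qten_assoc.
    apply (qle_qjoin y), qten_mono_r, psi_ten_unit.
Qed.

Definition collage : vcat V := VCat collage_hom_refl collage_hom_trans.

Definition collage_incl : vfun X collage :=
  @VFun V X collage Some (fun x y => qle_refl _).

Lemma collage_incl_ff : fully_faithful collage_incl.
Proof. now intros x y. Qed.

Lemma collage_incl_fd : fully_dense collage_incl.
Proof.
  intros [x|] [y|]; simpl; try reflexivity.
  - apply (qjoin_vhom_ten (f := fun z => vhom X z y)). intros; apply vhom_trans.
  - apply (qjoin_vhom_ten (f := fun z => psi z tt)). intros; apply (proj1 psi_module).
  - apply (qjoin_ten_vhom (f := fun z => phi tt z)). intros; apply (proj2 phi_module).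
Qed.

Lemma collage_retraction_represents (r : vfun collage X) :
  (forall x, vequiv (r (Some x)) x) -> forall y, phi tt y = vhom X (r None) y.
Proof.
  intros Hr y. apply qle_antisym.
  - apply (qle_trans (vmap_mono r None (Some y))).
    apply vhom_postcomp_le, Hr.
  - eapply qle_trans; [apply qle_ten_k_l, (proj1 phi_psi tt tt) |].
    apply qten_qjoin_le_r. intros x. rewrite <- qten_assoc.
    eapply qle_trans; [| apply (proj2 phi_module)]. apply qten_mono_r.
    eapply qle_trans; [| apply vhom_trans]. apply qten_mono_l.
    apply (qle_trans (vmap_mono r (Some x) None)).
    apply vhom_precomp_le, Hr.
Qed.

End Collage.

Lemma transpose_extension_retracts (V W : quantale) (G : functor V W)
  (F : functor W V) (adj : adjunction F G) (A : vcat V) (Y : vcat W)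
  (j : vfun (G A) Y) (g : vfun (F Y) A) :
  locally_monotone G ->
  (forall p, vequiv (g (fmap F j p)) (adj_counit adj A p)) ->
  forall x, vequiv (fmap G g (adj_unit adj Y (j x))) x.
Proof.
  intros HG Hg x.
  assert (le1 : vfun_le (vfun_comp g (fmap F j)) (adj_counit adj A))
    by (intros p; apply Hg).
  assert (le2 : vfun_le (adj_counit adj A) (vfun_comp g (fmap F j)))
    by (intros p; apply Hg).
  pose proof (HG _ _ _ _ le1 (adj_unit adj _ x)) as H1.
  pose proof (HG _ _ _ _ le2 (adj_unit adj _ x)) as H2.
  rewrite fmap_comp, adj_unit_nat, adj_triangle_G in H1, H2.
  split; assumption.
Qed.

Theorem corollary3p8 (V W : quantale) (G : functor V W) (F : functor W V)
  (adj : adjunction F G) :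
  locally_monotone G ->
  (forall (X Y : vcat W) (f : vfun X Y),
      fully_faithful f -> fully_dense f ->
      fully_faithful (fmap F f) /\ fully_dense (fmap F f)) ->
  forall A : vcat V, cauchy_complete A -> cauchy_complete (G A).
Proof.
  intros HG HF A HA phi phi_module [psi [psi_module phi_psi]].
  set (i := collage_incl phi_module psi_module phi_psi).
  destruct (HF _ _ i (@collage_incl_ff _ _ _ _ phi_module psi_module phi_psi)
                 (@collage_incl_fd _ _ _ _ phi_module psi_module phi_psi)) as [Fi_ff Fi_fd].
  destruct (cauchy_complete_extension (adj_counit adj A) Fi_ff Fi_fd HA) as [g Hg].
  set (r := vfun_comp (fmap G g) (adj_unit adj _)).
  exists (r None).
  apply (collage_retraction_represents (r := r)).
  exact (transpose_extension_retracts HG Hg).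
Qed.
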